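(* Let $n \ge 1$ and let $\boldsymbol{x} \in \mathbb{C}^n$ be a mixture of complex sinusoids, i.e. $\boldsymbol{x} = \sum_{k=1}^{K} s_k \boldsymbol{a}(f_k)$ for some $K$, $s_k \in \mathbb{C}$, $f_k \in [0,1)$. Then $$\|\boldsymbol{x}\|_{\mathcal{A}} = \inf_{r,\; d_j > 0,\; f_j \in [0,1)} \; \lim_{\beta \to 0^+} \left\{ \frac{1}{2}\sum_{j=1}^{r} d_j + \frac{1}{2}\, \boldsymbol{x}^H \boldsymbol{C}^{-1} \boldsymbol{x} \right\},$$ where $\boldsymbol{C} = \sum_{j=1}^{r} d_j\, \boldsymbol{a}(f_j)\boldsymbol{a}(f_j)^H + \beta \boldsymbol{I}$, the infimum is over all positive integers $r$, all $d_1,\dots,d_r>0$ and all $f_1,\dots,f_r \in [0,1)$, and the limit is allowed to take the value $+\infty$.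
   Context: For $f \in [0,1)$, the atom $\boldsymbol{a}(f) \in \mathbb{C}^n$ is $\boldsymbol{a}(f) = [1,\ e^{-2\pi i f},\ e^{-2\pi i 2f},\ \dots,\ e^{-2\pi i (n-1) f}]^T$. The atomic set is $\mathcal{A} = \{\boldsymbol{a}(f) : f \in [0,1)\}$, and the atomic norm of $\boldsymbol{x} \in \mathbb{C}^n$ is $\|\boldsymbol{x}\|_{\mathcal{A}} = \inf\{ \sum_{k=1}^{r} |s_k| : r \in \mathbb{N},\ s_k \in \mathbb{C},\ \boldsymbol{a}_k \in \mathcal{A},\ \boldsymbol{x} = \sum_{k=1}^{r} s_k \boldsymbol{a}_k \}$. $\boldsymbol{I}$ is the $n\times n$ identity, and $^H$ denotes conjugate transpose. *)

From HB Require Import structures.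
From mathcomp Require Import all_boot all_order all_algebra.
From mathcomp Require Import all_classical all_reals all_analysis.
From mathcomp Require Import complex.
Set Implicit Arguments. Unset Strict Implicit. Unset Printing Implicit Defensive.
Import Order.TTheory GRing.Theory Num.Theory.
Import numFieldNormedType.Exports.
Local Open Scope classical_set_scope.
Local Open Scope ring_scope.
Local Open Scope complex_scope.

(* The atom a(f) in C^n: a(f)_k = e^{-2 pi i k f} = cos(2 pi k f) - i sin(2 pi k f). *)
Definition atom (R : realType) (n : nat) (f : R) : 'cV[R[i]]_n :=
  \col_(k < n) ((cos (2 * pi * k%:R * f)) -i* (sin (2 * pi * k%:R * f))).

Definition ctrmx (R : realType) (m n : nat) (A : 'M[R[i]]_(m, n)) : 'M[R[i]]_(n, m) :=
  map_mx conjc A^T.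

Definition is_mixture (R : realType) (n : nat) (x : 'cV[R[i]]_n) : Prop :=
  exists (K : nat) (s : 'I_K -> R[i]) (f : 'I_K -> R),
    (forall k, 0 <= f k < 1) /\ x = \sum_(k < K) s k *: atom n (f k).

Definition atomic_norm (R : realType) (n : nat) (x : 'cV[R[i]]_n) : R :=
  inf [set t : R | exists (r : nat) (s : 'I_r -> R[i]) (f : 'I_r -> R),
         (forall k, 0 <= f k < 1) /\ x = \sum_(k < r) s k *: atom n (f k) /\
         t = \sum_(k < r) @complex.Re R `|s k|].

Definition covmx (R : realType) (n r : nat) (d f : 'I_r -> R) (beta : R)
  : 'M[R[i]]_n :=
  \sum_(j < r) (d j)%:C *: (atom n (f j) *m ctrmx (atom n (f j))) + (beta%:C)%:M.

(* the objective 1/2 sum d_j + 1/2 x^H C^{-1} x (the quadratic form is real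
   for beta > 0 since C is Hermitian; we take its real part) *)
Definition objective (R : realType) (n r : nat) (x : 'cV[R[i]]_n)
  (d f : 'I_r -> R) (beta : R) : \bar R :=
  ((2^-1 * \sum_(j < r) d j) +
   2^-1 * @complex.Re R ((ctrmx x *m invmx (covmx n d f beta) *m x) ord0 ord0))%:E.

From HB Require Import structures.
From mathcomp Require Import all_boot all_order all_algebra.
From mathcomp Require Import all_classical all_reals all_analysis.
From mathcomp Require Import complex.
From mathcomp Require Import ring lra.
Import Order.TTheory GRing.Theory Num.Theory.
Import numFieldNormedType.Exports.
Local Open Scope classical_set_scope.
Local Open Scope ring_scope.
Set Implicit Arguments. Unset Strict Implicit.

(* Fix weights d_j > 0 and frequencies f_j, and put C_b = sum_j d_j a_j a_j^H + b I
   and q(b) = x^H C_b^-1 x.  Since q is nonincreasing in b, the limit at 0+ exists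
   and is the supremum over b > 0.
   Upper bound: q(b) = max_v (2 Re v^H x - v^H C_b v), so for x = sum_k s_k a(f_k)
   AM-GM gives q(b) <= sum_k |s_k|^2 / d_k, and the weights d_k = |s_k| + e bring
   the limit down to sum_k |s_k| + O(e).
   Lower bound: with u = C_b^-1 x, x = sum_j d_j (a_j^H u) a_j + b u.  The first sum
   costs at most sum_j d_j |a_j^H u| <= 1/2 sum_j d_j + 1/2 q(b) by AM-GM; expanding
   b u in the fixed basis of atoms a(i/2n) costs O(sqrt b), because b |u|^2 <= q(b)
   stays bounded.  Letting b -> 0 bounds the atomic norm by the limit. *)

Section ComplexScalars.
Variable R : rcfType.
Implicit Types (a : R) (z w : R[i]).

Definition sqnormc z : R := complex.Re z ^+ 2 + complex.Im z ^+ 2.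

Lemma sqnormc_ge0 z : 0 <= sqnormc z.
Proof. by rewrite addr_ge0 ?sqr_ge0. Qed.

Lemma mulJc z : conjc z * z = (sqnormc z)%:C%C.
Proof. by rewrite mulrC -sqr_normc -add_Re2_Im2. Qed.

Lemma ReD z w : complex.Re (z + w) = complex.Re z + complex.Re w.
Proof. by case: z; case: w. Qed.

Lemma ReN z : complex.Re (- z) = - complex.Re z.
Proof. by case: z. Qed.

Lemma ReJ z : complex.Re (conjc z) = complex.Re z.
Proof. by case: z. Qed.

Lemma Re_sum I (r : seq I) (P : pred I) (F : I -> R[i]) :
  complex.Re (\sum_(i <- r | P i) F i) = \sum_(i <- r | P i) complex.Re (F i).
Proof. by elim/big_rec2: _ => // i y1 y2 _ <-; rewrite ReD. Qed.

Lemma Re_realM a z : complex.Re (a%:C%C * z) = a * complex.Re z.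
Proof. by case: z => x y /=; ring. Qed.

Lemma Re_le z w : z <= w -> complex.Re z <= complex.Re w.
Proof. by rewrite lecE => /andP[]. Qed.

Lemma Re_normc z : complex.Re `|z| = Num.sqrt (sqnormc z).
Proof. by rewrite normc_def. Qed.

Lemma Re_normc_ge0 z : 0 <= complex.Re `|z|.
Proof. by rewrite Re_normc sqrtr_ge0. Qed.

Lemma Re_normcM z w :
  complex.Re (`|z| * `|w|) = complex.Re `|z| * complex.Re `|w|.
Proof. by rewrite !normc_def /= mul0r subr0. Qed.

Lemma Re_normc_realM a z : 0 <= a ->
  complex.Re `|a%:C%C * z| = a * complex.Re `|z|.
Proof. by move=> a_ge0; rewrite normrM ger0_norm ?ler0c // Re_realM. Qed.

Lemma Re_conjcM_le z w a : 0 < a ->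
  complex.Re (conjc z * w) <= 2^-1 * (sqnormc z / a) + 2^-1 * (a * sqnormc w).
Proof.
case: z w => [x y] [x' y'] a_gt0; rewrite /sqnormc /= -subr_ge0.
rewrite (_ : _ - _ = ((x - a * x') ^+ 2 + (y - a * y') ^+ 2) / (2 * a)).
  by rewrite divr_ge0 ?addr_ge0 ?sqr_ge0 // mulr_ge0 // ltW.
by field; rewrite gt_eqF.
Qed.

End ComplexScalars.

Lemma sqrtr_le_mean (R : rcfType) (t : R) : 0 <= t -> Num.sqrt t <= (1 + t) / 2.
Proof.
move=> t_ge0; have := sqr_ge0 (1 - Num.sqrt t).
by rewrite sqrrB sqr_sqrtr // expr1n ler_pdivlMr //; lra.
Qed.

Lemma sum_Re_normc_realM_le (R : rcfType) r (d : 'I_r -> R) (z : 'I_r -> R[i]) :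
  (forall j, 0 <= d j) ->
  \sum_j complex.Re `|(d j)%:C%C * z j| <=
    2^-1 * \sum_j d j + 2^-1 * \sum_j d j * sqnormc (z j).
Proof.
move=> d_ge0; rewrite (_ : 2^-1 * _ + _ = \sum_j d j * ((1 + sqnormc (z j)) / 2)).
  apply: ler_sum => j _; rewrite Re_normc_realM // Re_normc ler_wpM2l //.
  by rewrite sqrtr_le_mean ?sqnormc_ge0.
by rewrite !mulr_sumr -big_split; apply: eq_bigr => j _ /=; ring.
Qed.

Section HermitianProduct.
Variables (R : rcfType) (n : nat).
Implicit Types u v w : 'cV[R[i]]_n.

Definition hdot u v : R[i] := \sum_l conjc (u l 0) * v l 0.

Lemma hdotJ u v : conjc (hdot u v) = hdot v u.
Proof.
rewrite rmorph_sum; apply: eq_bigr => l _.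
by rewrite rmorphM /= conjcK mulrC.
Qed.

Lemma hdotDr u v w : hdot u (v + w) = hdot u v + hdot u w.
Proof. by rewrite -big_split; apply: eq_bigr => l _; rewrite mxE mulrDr. Qed.

Lemma hdotZr u c v : hdot u (c *: v) = c * hdot u v.
Proof. by rewrite mulr_sumr; apply: eq_bigr => l _; rewrite mxE mulrCA. Qed.

Lemma hdotBr u v w : hdot u (v - w) = hdot u v - hdot u w.
Proof. by rewrite hdotDr -scaleN1r hdotZr mulN1r. Qed.

Lemma hdot_sumr u I (r : seq I) (P : pred I) (F : I -> 'cV[R[i]]_n) :
  hdot u (\sum_(i <- r | P i) F i) = \sum_(i <- r | P i) hdot u (F i).
Proof.
elim/big_rec2: _ => [|i y1 y2 _ <-]; last by rewrite hdotDr.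
by rewrite /hdot big1 // => l _; rewrite mxE mulr0.
Qed.

Lemma hdotZl c u v : hdot (c *: u) v = conjc c * hdot u v.
Proof. by rewrite -hdotJ hdotZr rmorphM /= !hdotJ. Qed.

Lemma hdotBl u v w : hdot (u - v) w = hdot u w - hdot v w.
Proof. by rewrite -hdotJ hdotBr rmorphB /= !hdotJ. Qed.

Lemma hdot_suml v I (r : seq I) (P : pred I) (F : I -> 'cV[R[i]]_n) :
  hdot (\sum_(i <- r | P i) F i) v = \sum_(i <- r | P i) hdot (F i) v.
Proof.
rewrite -hdotJ hdot_sumr rmorph_sum /=; apply: eq_bigr => i _; exact: hdotJ.
Qed.

Definition hsqnorm u : R := \sum_l sqnormc (u l 0).

Lemma hsqnorm_ge0 u : 0 <= hsqnorm u.
Proof. by apply: sumr_ge0 => l _; apply: sqnormc_ge0. Qed.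

Lemma hdotuu u : hdot u u = (hsqnorm u)%:C%C.
Proof. by rewrite rmorph_sum; apply: eq_bigr => l _; rewrite mulJc. Qed.

Lemma sqnormc_le_hsqnorm u l : sqnormc (u l 0) <= hsqnorm u.
Proof.
rewrite /hsqnorm (bigD1 l) //= lerDl.
by apply: sumr_ge0 => k _; apply: sqnormc_ge0.
Qed.

Lemma hsqnorm_eq0 u : hsqnorm u = 0 -> u = 0.
Proof.
move=> /eqP; rewrite psumr_eq0 => [/allP u0|l _]; last exact: sqnormc_ge0.
apply/matrixP => l j; rewrite ord1 mxE.
move: (u0 l (mem_index_enum l)) => /implyP /(_ isT).
case: (u l 0) => a b; rewrite /sqnormc /=.
by rewrite paddr_eq0 ?sqr_ge0 // !sqrf_eq0 => /andP[/eqP-> /eqP->].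
Qed.

End HermitianProduct.

Lemma ctrmx_mulmx (R : realType) n (u v : 'cV[R[i]]_n) :
  ctrmx u *m v = (hdot u v)%:M.
Proof.
rewrite [LHS]mx11_scalar !mxE; congr (_%:M).
by apply: eq_bigr => l _; rewrite !mxE.
Qed.

Section Covariance.
Variables (R : realType) (n r : nat) (d f : 'I_r -> R).
Hypothesis d_gt0 : forall j, 0 < d j.
Local Notation a j := (atom n (f j)).
Local Notation C := (covmx n d f).

Lemma covmx_mulmx b (w : 'cV[R[i]]_n) :
  C b *m w = \sum_j ((d j)%:C%C * hdot (a j) w) *: a j + b%:C%C *: w.
Proof.
rewrite /covmx mulmxDl mulmx_suml mul_scalar_mx; congr (_ + _).
apply: eq_bigr => j _.
by rewrite -scalemxAl -mulmxA ctrmx_mulmx mul_mx_scalar scalerA.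
Qed.

Lemma hdot_covmx b (v w : 'cV[R[i]]_n) : hdot v (C b *m w) =
  \sum_j (d j)%:C%C * (hdot (a j) w * conjc (hdot (a j) v)) + b%:C%C * hdot v w.
Proof.
rewrite covmx_mulmx hdotDr hdot_sumr hdotZr; congr (_ + _).
by apply: eq_bigr => j _; rewrite hdotZr -(hdotJ (a j) v) mulrA.
Qed.

Lemma hdot_covmxC b (v w : 'cV[R[i]]_n) :
  hdot v (C b *m w) = conjc (hdot w (C b *m v)).
Proof.
rewrite !hdot_covmx rmorphD rmorph_sum; congr (_ + _).
  by apply: eq_bigr => j _; rewrite !rmorphM /= conjcK oppr0 [_ * conjc _]mulrC.
by rewrite rmorphM /= oppr0 hdotJ.
Qed.

Definition covq b (w : 'cV[R[i]]_n) : R :=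
  \sum_j d j * sqnormc (hdot (a j) w) + b * hsqnorm w.

Lemma hdot_covmx_diag b (w : 'cV[R[i]]_n) : hdot w (C b *m w) = (covq b w)%:C%C.
Proof.
rewrite hdot_covmx hdotuu rmorphD rmorphM; congr (_ + _); rewrite rmorph_sum.
by apply: eq_bigr => j _; rewrite rmorphM /= -mulJc [conjc _ * _]mulrC.
Qed.

Lemma covq_ge0 b w : 0 <= b -> 0 <= covq b w.
Proof.
move=> b_ge0; rewrite addr_ge0 ?mulr_ge0 ?hsqnorm_ge0 //.
by apply: sumr_ge0 => j _; rewrite mulr_ge0 ?sqnormc_ge0 // ltW.
Qed.

Lemma covq_le b1 b2 w : b1 <= b2 -> covq b1 w <= covq b2 w.
Proof. by move=> b12; rewrite lerD2l ler_wpM2r ?hsqnorm_ge0. Qed.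

Lemma Re_normc_scale_le_covq b (w : 'cV[R[i]]_n) l : 0 <= b ->
  complex.Re `|(b%:C%C *: w) l 0| <= Num.sqrt (covq b w) * Num.sqrt b.
Proof.
move=> b_ge0; rewrite mxE Re_normc_realM // Re_normc.
have -> : b * Num.sqrt (sqnormc (w l 0)) = Num.sqrt (b * sqnormc (w l 0)) * Num.sqrt b.
  by rewrite sqrtrM // mulrAC -expr2 sqr_sqrtr.
rewrite ler_wpM2r ?sqrtr_ge0 //.
rewrite ler_sqrt ?covq_ge0 //; apply: le_trans (_ : b * hsqnorm w <= _).
  by rewrite ler_wpM2l ?sqnormc_le_hsqnorm.
by rewrite lerDr sumr_ge0 // => j _; rewrite mulr_ge0 ?sqnormc_ge0 ?ltW.
Qed.

Lemma covmx_unit b : 0 < b -> C b \in unitmx.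
Proof.
move=> b_gt0; rewrite -unitmx_tr -row_free_unit -kermx_eq0.
apply/eqP/row_matrixP => i; rewrite row0.
set v := row i _.
have vC0 : C b *m v^T = 0.
  have vCT0 : v *m (C b)^T = 0 by apply/sub_kermxP; rewrite row_sub.
  by rewrite -[C b]trmxK -trmx_mul vCT0 trmx0.
have := hdot_covmx_diag b v^T; rewrite vC0 -(scale0r 0) hdotZr mul0r.
move=> /esym[] /eqP; rewrite paddr_eq0 ?mulr_ge0 ?hsqnorm_ge0 ?(ltW b_gt0) //; last first.
  by apply: sumr_ge0 => j _; rewrite mulr_ge0 ?sqnormc_ge0 // ltW.
rewrite mulf_eq0 (gt_eqF b_gt0) => /andP[_ /eqP/hsqnorm_eq0 v0].
by rewrite -[v]trmxK v0 trmx0.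
Qed.

Variable x : 'cV[R[i]]_n.

Definition covsol b := invmx (C b) *m x.

Definition qinv b : R := complex.Re (hdot x (covsol b)).

Lemma objectiveE b : objective x d f b = (2^-1 * \sum_j d j + 2^-1 * qinv b)%:E.
Proof. by rewrite /objective -mulmxA ctrmx_mulmx mxE. Qed.

Lemma covmx_covsol b : 0 < b -> C b *m covsol b = x.
Proof. by move=> b_gt0; rewrite mulKVmx // covmx_unit. Qed.

Lemma qinvE b : 0 < b -> qinv b = covq b (covsol b).
Proof.
move=> b_gt0; rewrite /qinv -{1}(covmx_covsol b_gt0) -hdotJ hdot_covmx_diag.
by rewrite conjc_real.
Qed.

Lemma qinv_ge0 b : 0 < b -> 0 <= qinv b.
Proof. by move=> b_gt0; rewrite qinvE // covq_ge0 // ltW. Qed.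

(* [covq b (v - covsol b) >= 0] expands to the variational bound. *)
Lemma qinv_ge b v : 0 < b -> 2 * complex.Re (hdot v x) - covq b v <= qinv b.
Proof.
move=> b_gt0.
have E : covq b (v - covsol b) = covq b v - 2 * complex.Re (hdot v x) + qinv b.
  have := hdot_covmx_diag b (v - covsol b).
  rewrite mulmxBr covmx_covsol // hdotBl !hdotBr hdot_covmx_diag hdot_covmxC.
  rewrite covmx_covsol // => /(congr1 (@complex.Re R)) /= <-.
  by rewrite !(ReD, ReN) ReJ -(hdotJ x (covsol b)) ReJ /qinv /=; ring.
by have := covq_ge0 (v - covsol b) (ltW b_gt0); rewrite E; lra.
Qed.

Lemma qinv_nonincreasing b1 b2 : 0 < b1 -> b1 <= b2 -> qinv b2 <= qinv b1.
Proof.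
move=> b1_gt0 b12; have b2_gt0 := lt_le_trans b1_gt0 b12.
have := qinv_ge (covsol b2) b1_gt0; have := covq_le (covsol b2) b12.
by rewrite -(hdotJ x) ReJ -/(qinv b2) -qinvE //; lra.
Qed.

End Covariance.

Section AtomicNorm.
Variables (R : realType) (n : nat).
Implicit Type x : 'cV[R[i]]_n.

Definition atomic_costs x := [set t : R | exists r (s : 'I_r -> R[i]) (f : 'I_r -> R),
  (forall k, 0 <= f k < 1) /\ x = \sum_(k < r) s k *: atom n (f k) /\
  t = \sum_(k < r) complex.Re `|s k|].

Lemma atomic_costs_lbound x : has_lbound (atomic_costs x).
Proof.
exists 0 => _ [r [s [f [_ [_ ->]]]]].
by apply: sumr_ge0 => k _; apply: Re_normc_ge0.
Qed.

Lemma atomic_norm_le x r (s : 'I_r -> R[i]) (f : 'I_r -> R) :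
  (forall k, 0 <= f k < 1) -> x = \sum_(k < r) s k *: atom n (f k) ->
  atomic_norm x <= \sum_(k < r) complex.Re `|s k|.
Proof.
by move=> f01 xE; apply: (ge_inf (atomic_costs_lbound x)); exists r, s, f.
Qed.

Lemma atomic_norm_le_cat x r1 (s1 : 'I_r1 -> R[i]) (f1 : 'I_r1 -> R)
    r2 (s2 : 'I_r2 -> R[i]) (f2 : 'I_r2 -> R) :
  (forall k, 0 <= f1 k < 1) -> (forall k, 0 <= f2 k < 1) ->
  x = \sum_(k < r1) s1 k *: atom n (f1 k) + \sum_(k < r2) s2 k *: atom n (f2 k) ->
  atomic_norm x <= \sum_(k < r1) complex.Re `|s1 k| + \sum_(k < r2) complex.Re `|s2 k|.
Proof.
move=> f1_01 f2_01 xE.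
pose s k := match fintype.split k with inl j => s1 j | inr j => s2 j end.
pose f k := match fintype.split k with inl j => f1 j | inr j => f2 j end.
have splitl j : fintype.split (lshift r2 j) = inl j := unsplitK (inl j).
have splitr j : fintype.split (rshift r1 j) = inr j := unsplitK (inr j).
have -> : \sum_(k < r1) complex.Re `|s1 k| + \sum_(k < r2) complex.Re `|s2 k| =
    \sum_(k < r1 + r2) complex.Re `|s k|.
  by rewrite big_split_ord; congr (_ + _); apply: eq_bigr => j _; rewrite /s ?splitl ?splitr.
apply: (atomic_norm_le (f := f)) => [k|]; first by rewrite /f; case: (fintype.split k).
rewrite xE big_split_ord; congr (_ + _).
  by apply: eq_bigr => j _; rewrite /s /f splitl.
by apply: eq_bigr => j _; rewrite /s /f splitr.
Qed.

End AtomicNorm.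

Section GridBasis.
Variable R : realType.

Definition cexp (t : R) : R[i] := (cos t -i* sin t)%C.

Lemma cexpX (t : R) k : cexp t ^+ k = cexp (k%:R * t).
Proof.
elim: k => [|k IH]; first by rewrite expr0 mul0r /cexp cos0 sin0 oppr0.
rewrite exprSr IH /cexp -addn1 natrD mulrDl mul1r cosD sinD.
by apply/eqP; rewrite eq_complex /=; apply/andP; split; apply/eqP; ring.
Qed.

Lemma atom_cexp n (g : R) (l : 'I_n) : atom n g l 0 = cexp (2 * pi * g) ^+ l.
Proof. by rewrite cexpX mxE /cexp; congr (cos _ -i* sin _)%C; ring. Qed.

(* The denominator 2n keeps the angles 2 pi i / 2n in [[0, pi]], where cos is
   injective, so the grid atoms form a nonsingular Vandermonde matrix. *)
Definition grid_freq n (i : 'I_n) : R := i%:R / (2 * n%:R).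

Lemma grid_angleE n (i : 'I_n) : 2 * pi * grid_freq i = pi / n%:R * i%:R.
Proof.
have n_gt0 : (0 : R) < n%:R by rewrite ltr0n (leq_ltn_trans _ (ltn_ord i)).
by rewrite /grid_freq; field; rewrite gt_eqF.
Qed.

Lemma grid_freq_itv n (i : 'I_n) : 0 <= grid_freq i < 1.
Proof.
have n_gt0 : (0 : R) < n%:R by rewrite ltr0n (leq_ltn_trans _ (ltn_ord i)).
have i_lt_n : (i%:R : R) < n%:R by rewrite ltr_nat.
rewrite /grid_freq divr_ge0 ?mulr_ge0 ?ler0n //= ltr_pdivrMr ?mulr_gt0 //; lra.
Qed.

Lemma grid_angle_itv n (i : 'I_n) : 2 * pi * grid_freq i \in `[0, pi].
Proof.
have n_gt0 : (0 : R) < n%:R by rewrite ltr0n (leq_ltn_trans _ (ltn_ord i)).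
have i_le_n : (i%:R : R) <= n%:R by rewrite ler_nat ltnW.
have pi_ge0 := ltW (pi_gt0 R).
rewrite grid_angleE in_itv /= mulr_ge0 ?divr_ge0 ?ler0n //=.
by rewrite -mulrA ler_piMr // mulrC ler_pdivrMr // mul1r.
Qed.

Lemma grid_cexp_inj n : injective (fun i : 'I_n => cexp (2 * pi * grid_freq i)).
Proof.
move=> i j /(congr1 (@complex.Re R)) /(cos_inj (grid_angle_itv i) (grid_angle_itv j)).
have n_gt0 : (0 : R) < n%:R by rewrite ltr0n (leq_ltn_trans _ (ltn_ord i)).
rewrite !grid_angleE => /mulfI ij; apply/val_inj/eqP; rewrite -(eqr_nat R).
by rewrite ij // mulf_neq0 ?invr_eq0 ?gt_eqF ?pi_gt0.
Qed.

Definition gridmx n : 'M[R[i]]_n := Vandermonde n (\row_i cexp (2 * pi * grid_freq i)).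

Lemma gridmx_unit n : gridmx n \in unitmx.
Proof.
rewrite unitmxE unitfE det_Vandermonde; apply/prodf_neq0 => i _.
apply/prodf_neq0 => j ij; rewrite !mxE subr_eq0; apply/eqP => /grid_cexp_inj ji.
by move: ij; rewrite ji ltnn.
Qed.

Definition grid_bound n : R :=
  \sum_i \sum_l complex.Re `|invmx (gridmx n) i l|.

Lemma grid_bound_ge0 n : 0 <= grid_bound n.
Proof. by apply: sumr_ge0 => i _; apply: sumr_ge0 => l _; apply: Re_normc_ge0. Qed.

Lemma grid_decomp n (w : 'cV[R[i]]_n) : exists c : 'I_n -> R[i],
  w = \sum_i c i *: atom n (grid_freq i) /\
  \sum_i complex.Re `|c i| <= grid_bound n * \sum_l complex.Re `|w l 0|.
Proof.
pose V' := invmx (gridmx n); exists (fun i => (V' *m w) i 0); split.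
  rewrite -[LHS](mulKVmx (gridmx_unit n)); apply/matrixP => l k.
  rewrite ord1 !mxE summxE; apply: eq_bigr => i _.
  by rewrite !mxE -atom_cexp mxE mulrC.
rewrite mulr_suml; apply: ler_sum => i _; rewrite mulr_suml.
apply: le_trans (_ : \sum_l complex.Re `|V' i l| * complex.Re `|w l 0| <= _).
  rewrite -(eq_bigr _ (fun l _ => Re_normcM (V' i l) (w l 0))) -Re_sum mxE.
  apply/Re_le/(le_trans (ler_norm_sum _ _ _)).
  by apply: ler_sum => l _; rewrite normrM.
apply: ler_sum => l _; apply: ler_wpM2l; first exact: Re_normc_ge0.
rewrite (bigD1 l) //= lerDl; apply: sumr_ge0 => k _; exact: Re_normc_ge0.
Qed.

End GridBasis.

Section Bounds.
Variables (R : realType) (n r : nat) (d f : 'I_r -> R) (x : 'cV[R[i]]_n).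
Hypotheses (d_gt0 : forall j, 0 < d j) (f01 : forall j, 0 <= f j < 1).
Local Notation a j := (atom n (f j)).

Lemma atomic_norm_le_qinv b L : 0 < b -> qinv d f x b <= L ->
  atomic_norm x <=
    2^-1 * \sum_j d j + 2^-1 * L + grid_bound R n * n%:R * Num.sqrt L * Num.sqrt b.
Proof.
move=> b_gt0 qL; set u := covsol d f x b.
have uL : covq d f b u <= L by rewrite -qinvE.
have xE : x = \sum_j ((d j)%:C%C * hdot (a j) u) *: a j + b%:C%C *: u.
  by rewrite -covmx_mulmx covmx_covsol.
have [c [uE cK]] := grid_decomp (b%:C%C *: u).
apply: le_trans (atomic_norm_le_cat f01 (@grid_freq_itv R n) (etrans xE (congr1 _ uE))) _.
have uLa : \sum_j d j * sqnormc (hdot (a j) u) <= L.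
  by apply: le_trans uL; rewrite lerDl mulr_ge0 ?hsqnorm_ge0 ?ltW.
apply: lerD.
  apply: le_trans (sum_Re_normc_realM_le _ (fun j => ltW (d_gt0 j))) _.
  by rewrite lerD2l ler_wpM2l.
apply: le_trans cK _; rewrite -!mulrA ler_wpM2l ?grid_bound_ge0 //.
have entry_le l : complex.Re `|(b%:C%C *: u) l 0| <= Num.sqrt L * Num.sqrt b.
  apply: le_trans (Re_normc_scale_le_covq f d_gt0 u l (ltW b_gt0)) _.
  by rewrite ler_wpM2r ?sqrtr_ge0 // ler_sqrt ?(le_trans (covq_ge0 f d_gt0 u (ltW b_gt0)) uL).
apply: le_trans (ler_sum _ (fun l _ => entry_le l)) _.
by rewrite sumr_const card_ord mulr_natl.
Qed.

Lemma qinv_le_cost (s : 'I_r -> R[i]) b : x = \sum_k s k *: a k -> 0 < b ->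
  qinv d f x b <= \sum_k sqnormc (s k) / d k.
Proof.
move=> xE b_gt0; set u := covsol d f x b.
have atoms_le_q : \sum_k d k * sqnormc (hdot (a k) u) <= qinv d f x b.
  by rewrite qinvE // lerDl mulr_ge0 ?hsqnorm_ge0 ?ltW.
suff : qinv d f x b <=
    2^-1 * \sum_k sqnormc (s k) / d k + 2^-1 * \sum_k d k * sqnormc (hdot (a k) u).
  by lra.
rewrite /qinv -/u {1}xE hdot_suml Re_sum !mulr_sumr -big_split; apply: ler_sum => k _ /=.
by rewrite hdotZl; apply: Re_conjcM_le.
Qed.

End Bounds.

Lemma ler_add_sqrt_gt0 (R : rcfType) (y z M : R) : 0 <= M ->
  (forall b, 0 < b -> y <= z + M * Num.sqrt b) -> y <= z.
Proof.
move=> M_ge0 yz; apply/ler_addgt0Pr => e e_gt0.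
have Me_gt0 : 0 < e / (M + 1) by rewrite divr_gt0 ?ltr_wpDl.
apply: le_trans (yz _ (exprn_gt0 2 Me_gt0)) _.
rewrite sqrtr_sqr ger0_norm ?(ltW Me_gt0) // lerD2l mulrA ler_pdivrMr ?ltr_wpDl //; nra.
Qed.

Section Limit.
Variables (R : realType) (n : nat) (x : 'cV[R[i]]_n).

Definition objective_lims := [set l : \bar R | exists (r : nat) (d f : 'I_r -> R),
  [/\ (0 < r)%N, (forall j, 0 < d j), (forall j, 0 <= f j < 1) &
      objective x d f beta @[beta --> 0^'+] --> l]].

Section Weights.
Variables (r : nat) (d f : 'I_r -> R).
Hypothesis d_gt0 : forall j, 0 < d j.

Lemma objective_cvg :
  objective x d f beta @[beta --> 0^'+] --> ereal_sup (objective x d f @` `]0, +oo[).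
Proof.
apply: nonincreasing_at_right_cvge => // b1 b2.
rewrite !in_itv /= !andbT => b1_gt0 _ b12.
by rewrite !objectiveE lee_fin lerD2l ler_wpM2l ?invr_ge0 ?ler0n ?qinv_nonincreasing.
Qed.

Lemma objective_le_lim l b : objective x d f beta @[beta --> 0^'+] --> l -> 0 < b ->
  (objective x d f b <= l)%E.
Proof.
move=> dfl b_gt0.
have -> : l = ereal_sup (objective x d f @` `]0, +oo[).
  have lim_cvg := cvg_lim (@ereal_hausdorff R) (FF := at_right_proper_filter 0).
  by rewrite -(lim_cvg _ _ _ dfl) -(lim_cvg _ _ _ objective_cvg).
by apply: ereal_sup_ubound; exists b => //=; rewrite in_itv /= andbT.
Qed.

Lemma atomic_norm_le_objective_lim l : (forall j, 0 <= f j < 1) ->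
  objective x d f beta @[beta --> 0^'+] --> l -> ((atomic_norm x)%:E <= l)%E.
Proof.
move=> f01 /objective_le_lim obj_le.
case: l obj_le => [l'| |] obj_le; last 2 first.
- by rewrite leey.
- by have := obj_le 1 ltr01; rewrite objectiveE.
rewrite lee_fin; set L := 2 * l' - \sum_j d j.
have qL b : 0 < b -> qinv d f x b <= L.
  by move=> b_gt0; have := obj_le b b_gt0; rewrite objectiveE lee_fin /L; lra.
have -> : l' = 2^-1 * \sum_j d j + 2^-1 * L by rewrite /L; field.
apply: (@ler_add_sqrt_gt0 _ _ _ (grid_bound R n * n%:R * Num.sqrt L)) => [|b b_gt0].
  by rewrite !mulr_ge0 ?grid_bound_ge0 ?sqrtr_ge0.
by apply: atomic_norm_le_qinv => //; apply: qL.
Qed.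

End Weights.

(* Weights d_k = |s_k| + e/r make sum_k |s_k|^2 / d_k <= sum_k |s_k|. *)
Lemma objective_lim_le_cost r (s : 'I_r -> R[i]) (f : 'I_r -> R) e :
  (0 < r)%N -> (forall k, 0 <= f k < 1) -> x = \sum_k s k *: atom n (f k) -> 0 < e ->
  exists2 l, objective_lims l & (l <= (\sum_k complex.Re `|s k| + e)%:E)%E.
Proof.
move=> r_gt0 f01 xE e_gt0.
have r_gt0R : (0 : R) < r%:R by rewrite ltr0n.
pose d k := complex.Re `|s k| + e / r%:R.
have d_gt0 k : 0 < d k by rewrite ltr_wpDl ?Re_normc_ge0 ?divr_gt0.
exists (ereal_sup (objective x d f @` `]0, +oo[)).
  by exists r, d, f; split => //; apply: objective_cvg.
apply: ge_ereal_sup => y [b]; rewrite /= in_itv /= andbT => b_gt0 <-.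
rewrite objectiveE lee_fin.
have cost_le : \sum_k sqnormc (s k) / d k <= \sum_k complex.Re `|s k|.
  apply: ler_sum => k _; have sk_ge0 := Re_normc_ge0 (s k).
  rewrite -[sqnormc _]sqr_sqrtr ?sqnormc_ge0 // -Re_normc ler_pdivrMr //.
  by rewrite /d expr2 ler_wpM2l // lerDl ltW ?divr_gt0.
have -> : \sum_k d k = \sum_k complex.Re `|s k| + e.
  by rewrite big_split sumr_const card_ord -[_ *+ r]mulr_natr divfK ?gt_eqF.
by have := qinv_le_cost d_gt0 xE b_gt0; lra.
Qed.

Lemma ereal_inf_objective_lims_le : is_mixture x ->
  (ereal_inf objective_lims <= (atomic_norm x)%:E)%E.
Proof.
case=> K [s0 [f0 [f0_01 x0E]]]; apply/lee_addgt0Pr => e e_gt0.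
have e2_gt0 : 0 < e / 2 by rewrite divr_gt0.
have has_inf_costs : has_inf (atomic_costs x).
  by split; [exists (\sum_k complex.Re `|s0 k|), K, s0, f0 | apply: atomic_costs_lbound].
have [_ [r [s [f [f01 [xE ->]]]]] cost_lt] := inf_adherent e2_gt0 has_inf_costs.
have [r' [s' [f' [r'_gt0 f'01 xE' costE]]]] : exists r' (s' : 'I_r' -> R[i]) f',
    [/\ (0 < r')%N, forall k, 0 <= f' k < 1, x = \sum_k s' k *: atom n (f' k) &
        \sum_k complex.Re `|s' k| = \sum_k complex.Re `|s k|].
  case: r s f f01 xE {cost_lt} => [|r] s f f01 xE; last by exists r.+1, s, f.
  exists 1%N, (fun=> 0), (fun=> 0); split => //; first by move=> k; rewrite lexx ltr01.
    by rewrite xE big_ord0 big1 // => k _; rewrite scale0r.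
  by rewrite big_ord0 big1 // => k _; rewrite normr0.
have [l l_lim l_le] := objective_lim_le_cost r'_gt0 f'01 xE' e2_gt0.
apply: le_trans (ereal_inf_lbound l_lim) _; apply: le_trans l_le _.
by rewrite lee_fin costE; rewrite /atomic_norm -/(atomic_costs x) in cost_lt; lra.
Qed.

End Limit.

Theorem theorem1 (R : realType) (n : nat) (x : 'cV[R[i]]_n) :
  (0 < n)%N -> is_mixture x ->
  (forall (r : nat) (d f : 'I_r -> R),
     (0 < r)%N -> (forall j, 0 < d j) -> (forall j, 0 <= f j < 1) ->
     exists l : \bar R, objective x d f beta @[beta --> 0^'+] --> l) /\
  (atomic_norm x)%:E =
    ereal_inf [set l : \bar R | exists (r : nat) (d f : 'I_r -> R),
      [/\ (0 < r)%N, (forall j, 0 < d j), (forall j, 0 <= f j < 1) &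
          objective x d f beta @[beta --> 0^'+] --> l]].
Proof.
move=> _ x_mix; split=> [r d f _ d_gt0 _|]; first by eexists; apply: objective_cvg.
apply/eqP; rewrite eq_le ereal_inf_objective_lims_le // andbT.
apply: le_ereal_inf_tmp => l [r [d [f [_ d_gt0 f01 dfl]]]].
exact: atomic_norm_le_objective_lim dfl.
Qed.
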